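(* There is an absolute constant $C$ such that for every $n\geq 1$ and every $w\in\{0,1\}^n$, there is a first-order sentence over $\tau_{\mathsf{string}}$ with at most $3\log_3(n)+C$ quantifiers that is true in $\mathbf{B}_w$ and false in $\mathbf{B}_{w'}$ for every binary string $w'\neq w$ of any length $\geq 1$.
   Context: Vocabulary $\tau_{\mathsf{string}}=\langle <, S;\ \mathsf{min},\mathsf{max}\rangle$ with $<$ binary, $S$ unary, $\mathsf{min},\mathsf{max}$ constants. A string $w=w_1\cdots w_n\in\{0,1\}^n$ ($n\geq 1$) is encoded by the structure $\mathbf{B}_w$ with universe $\{1,\dots,n\}$, $<$ the usual order, $S=\{i: w_i=1\}$, $\mathsf{min}=1$, $\mathsf{max}=n$. The number of quantifiers is the number of quantifier occurrences. *)

From Stdlib Require Import Reals List Arith.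
Import ListNotations.

Inductive term : Type :=
| TVar : nat -> term
| TMin : term
| TMax : term.

Inductive formula : Type :=
| FEq   : term -> term -> formula
| FLt   : term -> term -> formula
| FS    : term -> formula
| FTrue : formula
| FFalse : formula
| FNot  : formula -> formula
| FAnd  : formula -> formula -> formula
| FOr   : formula -> formula -> formula
| FImp  : formula -> formula -> formula
| FEx   : nat -> formula -> formula
| FAll  : nat -> formula -> formula.

Fixpoint qcount (f : formula) : nat :=
  match f with
  | FEq _ _ | FLt _ _ | FS _ | FTrue | FFalse => 0
  | FNot g => qcount g
  | FAnd g h | FOr g h | FImp g h => qcount g + qcount h
  | FEx _ g | FAll _ g => S (qcount g)
  end.

Definition term_vars (t : term) : list nat :=
  match t with TVar x => [x] | _ => [] end.

Fixpoint fv (f : formula) : list nat :=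
  match f with
  | FEq s t | FLt s t => term_vars s ++ term_vars t
  | FS t => term_vars t
  | FTrue | FFalse => []
  | FNot g => fv g
  | FAnd g h | FOr g h | FImp g h => fv g ++ fv h
  | FEx x g | FAll x g => filter (fun y => negb (Nat.eqb y x)) (fv g)
  end.

Definition sentence (f : formula) : Prop := fv f = [].

(* The structure B_w: universe {1,...,n} with n = length w, usual order,
   S = {i | w_i = 1}, min = 1, max = n.  Position i (1-based) carries the
   letter nth (i-1) w false ; true encodes the letter 1. *)
Definition eval_term (w : list bool) (a : nat -> nat) (t : term) : nat :=
  match t with
  | TVar x => a x
  | TMin => 1
  | TMax => length w
  end.

Definition update (a : nat -> nat) (x v : nat) : nat -> nat :=
  fun y => if Nat.eqb y x then v else a y.

Fixpoint sat (w : list bool) (a : nat -> nat) (f : formula) : Prop :=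
  match f with
  | FEq s t => eval_term w a s = eval_term w a t
  | FLt s t => eval_term w a s < eval_term w a t
  | FS t => nth (eval_term w a t - 1) w false = true
  | FTrue => True
  | FFalse => False
  | FNot g => ~ sat w a g
  | FAnd g h => sat w a g /\ sat w a h
  | FOr g h => sat w a g \/ sat w a h
  | FImp g h => sat w a g -> sat w a h
  | FEx x g => exists v, 1 <= v <= length w /\ sat w (update a x v) g
  | FAll x g => forall v, 1 <= v <= length w -> sat w (update a x v) g
  end.

(* Truth of a sentence in B_w (assignment irrelevant for sentences; we use
   the assignment sending every variable to min = 1, an element of the
   universe when length w >= 1). *)
Definition models (w : list bool) (f : formula) : Prop := sat w (fun _ => 1) f.

Definition log3 (x : R) : R := ln x / ln 3.

(* A string [b :: v] is determined by its first letter together with the fact that positions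
   [2 .. n] spell [v].  That a segment (l, h] spells a word is expressed by cutting it at two
   existentially quantified points z1 <= z2 into parts of length at most 3^d and checking the
   three parts recursively.  The three recursive checks share their quantifiers: a universally
   quantified probe u selects the part containing it, and only that part is checked further.
   After k levels there are 3^k candidate segments, each guarded by a quantifier-free formula
   recording which parts the earlier probes fell into, and at most one guard holds.  Each level
   costs three quantifiers and divides the length by 3, so the depth D with n <= 3^D < 3n
   yields 3D + 1 <= 3 log_3 n + 4 quantifiers. *)

From Stdlib Require Import Reals List Arith Lia Lra Classical.
Import ListNotations.

(** * Quantifier-free formulas and assignments *)

Lemma update_eq (a : nat -> nat) x v : update a x v x = v.
Proof. unfold update. now rewrite Nat.eqb_refl. Qed.

Lemma update_neq (a : nat -> nat) x v y : y <> x -> update a x v y = a y.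
Proof. intros Hyx. unfold update. apply Nat.eqb_neq in Hyx. now rewrite Hyx. Qed.

Lemma eval_update_var w a x v : eval_term w (update a x v) (TVar x) = v.
Proof. apply update_eq. Qed.

Definition term_below (m : nat) (t : term) : Prop :=
  match t with TVar x => x < m | _ => True end.

Fixpoint qf_below (m : nat) (f : formula) : Prop :=
  match f with
  | FEq s t | FLt s t => term_below m s /\ term_below m t
  | FS t => term_below m t
  | FTrue | FFalse => True
  | FNot g => qf_below m g
  | FAnd g h | FOr g h | FImp g h => qf_below m g /\ qf_below m h
  | FEx _ _ | FAll _ _ => False
  end.

Lemma term_below_mono m m' t : m <= m' -> term_below m t -> term_below m' t.
Proof. destruct t; cbn; lia. Qed.

Lemma qf_below_mono m m' f : m <= m' -> qf_below m f -> qf_below m' f.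
Proof. intros Hm. induction f; cbn; intuition eauto using term_below_mono. Qed.

Lemma qcount_qf_below m f : qf_below m f -> qcount f = 0.
Proof. induction f; cbn; intuition lia. Qed.

Definition agree_below (m : nat) (a a' : nat -> nat) : Prop :=
  forall x, x < m -> a x = a' x.

Lemma agree_below_update m a x v : m <= x -> agree_below m a (update a x v).
Proof. intros Hx y Hy. symmetry. apply update_neq. lia. Qed.

Lemma agree_below_trans m a a' a'' :
  agree_below m a a' -> agree_below m a' a'' -> agree_below m a a''.
Proof. intros H H' x Hx. rewrite H by exact Hx. auto. Qed.

Lemma eval_agree w m a a' t :
  term_below m t -> agree_below m a a' -> eval_term w a t = eval_term w a' t.
Proof. destruct t; cbn; auto. Qed.

Lemma sat_agree w m a a' f :
  qf_below m f -> agree_below m a a' -> (sat w a f <-> sat w a' f).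
Proof.
  intros Hf Ha. induction f; cbn in Hf |- *;
    repeat match goal with H : _ /\ _ |- _ => destruct H end;
    repeat match goal with
           | H : term_below m ?t |- _ => rewrite (eval_agree w m a a' t H Ha); clear H
           end;
    intuition tauto.
Qed.

Definition free_below (m : nat) (f : formula) : Prop := forall y, In y (fv f) -> y < m.

Lemma free_below_qf m f : qf_below m f -> free_below m f.
Proof.
  intros Hf y. induction f; cbn in Hf |- *; try tauto;
    rewrite ?in_app_iff; intuition;
    repeat match goal with t : term |- _ => destruct t end; cbn in *; intuition lia.
Qed.

Lemma free_below_FAnd m g h : free_below m g -> free_below m h -> free_below m (FAnd g h).
Proof. intros Hg Hh y. cbn. rewrite in_app_iff. intuition. Qed.

Lemma free_below_FAll m x g : m <= S x -> free_below m g -> free_below x (FAll x g).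
Proof.
  intros Hm Hg y. cbn. rewrite filter_In, Bool.negb_true_iff, Nat.eqb_neq.
  intros [Hy Hne]. specialize (Hg y Hy). lia.
Qed.

Lemma free_below_FEx m x g : m <= S x -> free_below m g -> free_below x (FEx x g).
Proof. exact (free_below_FAll m x g). Qed.

Lemma sentence_free_below0 f : free_below 0 f -> sentence f.
Proof.
  unfold sentence, free_below. destruct (fv f) as [|y l]; auto.
  intros H. specialize (H y (or_introl eq_refl)). lia.
Qed.

Fixpoint FConj (l : list formula) : formula :=
  match l with [] => FTrue | f :: l => FAnd f (FConj l) end.

Lemma sat_FConj_map {A} w a (F : A -> formula) l :
  sat w a (FConj (map F l)) <-> forall x, In x l -> sat w a (F x).
Proof.
  induction l as [|x l IH]; cbn; [tauto|]. rewrite IH.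
  split; [intros [Hx Hl] y [<-|Hy]; auto | intros H; split; auto].
Qed.

Lemma qf_below_FConj_map {A} m (F : A -> formula) l :
  (forall x, In x l -> qf_below m (F x)) -> qf_below m (FConj (map F l)).
Proof. induction l; cbn; auto. Qed.

Definition FLe (s t : term) : formula := FNot (FLt t s).
Definition FWithin (l h x : term) : formula := FAnd (FLt l x) (FLe x h).
Definition FLetter (t : term) (b : bool) : formula := if b then FS t else FNot (FS t).

Definition FOrdered (v : list bool) (s t : term) : formula :=
  match v with [] => FEq s t | _ => FLt s t end.

Definition ordered_for (v : list bool) (l h : nat) : Prop :=
  match v with [] => l = h | _ => l < h end.

Lemma sat_FWithin w a l h x :
  sat w a (FWithin l h x) <->
  eval_term w a l < eval_term w a x <= eval_term w a h.
Proof. cbn. lia. Qed.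

Lemma sat_FLetter w a t b :
  sat w a (FLetter t b) <-> nth (eval_term w a t - 1) w false = b.
Proof. destruct b; cbn; destruct (nth _ w false); intuition congruence. Qed.

Lemma sat_FOrdered w a v s t :
  sat w a (FOrdered v s t) <-> ordered_for v (eval_term w a s) (eval_term w a t).
Proof. destruct v; reflexivity. Qed.

(** * Segments spelling a word *)

(* Positions [l+1 .. h] of [B_w] carry [v]; position [p] holds [nth (p-1) w false]. *)
Definition spells (w : list bool) (l h : nat) (v : list bool) : Prop :=
  l + length v = h /\ forall i, i < length v -> nth (l + i) w false = nth i v false.

Lemma spells_nil w l : spells w l l [].
Proof. split; cbn; [lia | intros; lia]. Qed.

Lemma spells_ordered w l h v : spells w l h v -> ordered_for v l h.
Proof. intros [E _]. destruct v; cbn in *; lia. Qed.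

Lemma spells_app w l m h x y : spells w l m x -> spells w m h y -> spells w l h (x ++ y).
Proof.
  intros [Ex Hx] [Ey Hy]. split; [rewrite length_app; lia|].
  intros i Hi. rewrite length_app in Hi. destruct (Nat.lt_ge_cases i (length x)).
  - rewrite app_nth1 by assumption. auto.
  - rewrite app_nth2 by assumption. replace (l + i) with (m + (i - length x)) by lia.
    apply Hy. lia.
Qed.

Lemma spells_app_inv w l h x y :
  spells w l h (x ++ y) -> spells w l (l + length x) x /\ spells w (l + length x) h y.
Proof.
  intros [E H]. rewrite length_app in *. split; split; try lia.
  - intros i Hi. rewrite H by lia. apply app_nth1; auto.
  - intros i Hi. replace (l + length x + i) with (l + (length x + i)) by lia.
    rewrite H by lia. rewrite app_nth2 by lia. f_equal; lia.
Qed.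

Lemma spells_from_one x w v : spells (x :: w) 1 (S (length w)) v -> w = v.
Proof.
  intros [E H]. apply nth_ext with (d := false) (d' := false); [cbn in E; lia|].
  intros i Hi. exact (H i ltac:(cbn in E; lia)).
Qed.

Definition part1 (c : nat) (v : list bool) : list bool := firstn c v.
Definition part2 (c : nat) (v : list bool) : list bool := firstn c (skipn c v).
Definition part3 (c : nat) (v : list bool) : list bool := skipn (c + c) v.

Lemma parts_cat c v : part1 c v ++ part2 c v ++ part3 c v = v.
Proof.
  unfold part1, part2, part3. rewrite <- skipn_skipn, firstn_skipn. apply firstn_skipn.
Qed.

Lemma length_parts c v : length v <= 3 * c ->
  length (part1 c v) <= c /\ length (part2 c v) <= c /\ length (part3 c v) <= c.
Proof.
  unfold part1, part2, part3. rewrite !length_firstn, !length_skipn. lia.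
Qed.

Definition split_at (w : list bool) (c l z1 z2 h : nat) (v : list bool) : Prop :=
  spells w l z1 (part1 c v) /\ spells w z1 z2 (part2 c v) /\ spells w z2 h (part3 c v).

Lemma split_at_spells w c l z1 z2 h v : split_at w c l z1 z2 h v -> spells w l h v.
Proof.
  intros (S1 & S2 & S3). rewrite <- (parts_cat c v).
  apply (spells_app _ _ z1); [|apply (spells_app _ _ z2)]; assumption.
Qed.

Lemma spells_split_at w c l h v :
  spells w l h v ->
  split_at w c l (l + length (part1 c v)) (l + length (part1 c v) + length (part2 c v)) h v.
Proof.
  rewrite <- (parts_cat c v) at 1. intros S.
  apply spells_app_inv in S as [S1 S23]. apply spells_app_inv in S23 as [S2 S3].
  split; [|split]; assumption.
Qed.

Lemma split_at_ordered w c l z1 z2 h v : split_at w c l z1 z2 h v ->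
  ordered_for (part1 c v) l z1 /\ ordered_for (part2 c v) z1 z2 /\
  ordered_for (part3 c v) z2 h.
Proof. intros (S1 & S2 & S3). split; [|split]; eapply spells_ordered; eassumption. Qed.

(** * The describing formula *)

(* A branch asks that the segment [(lo, hi]] spell [word], provided [guard] holds. *)
Record branch := Branch { guard : formula; word : list bool; lo : term; hi : term }.

Definition Z1 (k : nat) : term := TVar (3 * k).
Definition Z2 (k : nat) : term := TVar (3 * k + 1).
Definition U (k : nat) : term := TVar (3 * k + 2).

Definition child (k : nat) (b : branch) (v : list bool) (l h : term) : branch :=
  Branch (FAnd (guard b) (FWithin l h (U k))) v l h.

Definition children (k c : nat) (b : branch) : list branch :=
  [child k b (part1 c (word b)) (lo b) (Z1 k);
   child k b (part2 c (word b)) (Z1 k) (Z2 k);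
   child k b (part3 c (word b)) (Z2 k) (hi b)].

Definition split_constraint (k c : nat) (b : branch) : formula :=
  FImp (guard b)
    (FAnd (FOrdered (part1 c (word b)) (lo b) (Z1 k))
      (FAnd (FOrdered (part2 c (word b)) (Z1 k) (Z2 k))
            (FOrdered (part3 c (word b)) (Z2 k) (hi b)))).

(* [Z1 k] is reused as the universally quantified variable that identifies the successor. *)
Definition leaf_constraint (k : nat) (b : branch) : formula :=
  FImp (guard b)
    (match word b with
     | [] => FEq (lo b) (hi b)
     | [x] => FAnd (FLt (lo b) (hi b))
                (FAnd (FImp (FWithin (lo b) (hi b) (Z1 k)) (FEq (Z1 k) (hi b)))
                      (FLetter (hi b) x))
     | _ => FFalse
     end).

Fixpoint describe (k d : nat) (bs : list branch) : formula :=
  match d with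
  | 0 => FAll (3 * k) (FConj (map (leaf_constraint k) bs))
  | S d' =>
      FEx (3 * k) (FEx (3 * k + 1)
        (FAnd (FConj (map (split_constraint k (3 ^ d')) bs))
              (FAll (3 * k + 2) (describe (S k) d' (flat_map (children k (3 ^ d')) bs)))))
  end.

Definition branch_below (m : nat) (b : branch) : Prop :=
  qf_below m (guard b) /\ term_below m (lo b) /\ term_below m (hi b).

Definition all_below (m : nat) (bs : list branch) : Prop :=
  forall b, In b bs -> branch_below m b.

Lemma children_below k c b e :
  branch_below (3 * k) b -> In e (children k c b) -> branch_below (3 * S k) e.
Proof.
  intros (Hg & Hl & Hh) He.
  assert (Hm : 3 * k <= 3 * S k) by lia.
  pose proof (qf_below_mono _ _ _ Hm Hg). pose proof (term_below_mono _ _ _ Hm Hl).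
  pose proof (term_below_mono _ _ _ Hm Hh).
  destruct He as [<-|[<-|[<-|[]]]];
    unfold branch_below, child, FWithin, FLe, Z1, Z2, U;
    cbn [guard lo hi qf_below term_below]; repeat split; auto; lia.
Qed.

Lemma all_below_children k c bs :
  all_below (3 * k) bs -> all_below (3 * S k) (flat_map (children k c) bs).
Proof.
  intros Hbs e He. apply in_flat_map in He as (b & Hb & He).
  exact (children_below k c b e (Hbs b Hb) He).
Qed.

Lemma split_constraint_below k c b :
  branch_below (3 * k) b -> qf_below (3 * k + 2) (split_constraint k c b).
Proof.
  intros (Hg & Hl & Hh).
  assert (Hm : 3 * k <= 3 * k + 2) by lia.
  pose proof (qf_below_mono _ _ _ Hm Hg). pose proof (term_below_mono _ _ _ Hm Hl).
  pose proof (term_below_mono _ _ _ Hm Hh).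
  unfold split_constraint, Z1, Z2.
  cbn [qf_below]; repeat split; try assumption;
    match goal with |- qf_below _ (FOrdered ?v _ _) => destruct v end;
    cbn [FOrdered qf_below term_below]; split; auto; lia.
Qed.

Lemma leaf_constraint_below k b :
  branch_below (3 * k) b -> qf_below (3 * k + 1) (leaf_constraint k b).
Proof.
  intros (Hg & Hl & Hh).
  assert (Hm : 3 * k <= 3 * k + 1) by lia.
  pose proof (qf_below_mono _ _ _ Hm Hg). pose proof (term_below_mono _ _ _ Hm Hl).
  pose proof (term_below_mono _ _ _ Hm Hh).
  unfold leaf_constraint, FWithin, FLe, FLetter, Z1.
  cbn [qf_below]. split; [assumption|].
  destruct (word b) as [|x [|y v]]; cbn [qf_below term_below]; auto.
  destruct x; cbn [qf_below term_below]; repeat split; auto; lia.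
Qed.

Lemma qcount_describe d : forall k bs,
  all_below (3 * k) bs -> qcount (describe k d bs) = 3 * d + 1.
Proof.
  induction d as [|d IH]; intros k bs Hbs; cbn [describe qcount].
  - rewrite (qcount_qf_below (3 * k + 1)); [lia|].
    apply qf_below_FConj_map. intros b Hb. exact (leaf_constraint_below k b (Hbs b Hb)).
  - rewrite (qcount_qf_below (3 * k + 2)).
    + rewrite IH by (apply all_below_children; assumption). lia.
    + apply qf_below_FConj_map. intros b Hb. exact (split_constraint_below k _ b (Hbs b Hb)).
Qed.

Lemma free_below_describe d : forall k bs,
  all_below (3 * k) bs -> free_below (3 * k) (describe k d bs).
Proof.
  induction d as [|d IH]; intros k bs Hbs; cbn [describe].
  - apply (free_below_FAll (3 * k + 1)); [lia|]. apply free_below_qf, qf_below_FConj_map.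
    intros b Hb. exact (leaf_constraint_below k b (Hbs b Hb)).
  - apply (free_below_FEx (3 * k + 1)); [lia|].
    apply (free_below_FEx (3 * k + 2)); [lia|].
    apply free_below_FAnd.
    + apply free_below_qf, qf_below_FConj_map.
      intros b Hb. exact (split_constraint_below k _ b (Hbs b Hb)).
    + apply (free_below_FAll (3 * S k)); [lia|]. apply IH, all_below_children, Hbs.
Qed.

(** * Soundness and completeness *)

Definition in_universe (w : list bool) (a : nat -> nat) : Prop :=
  forall x, 1 <= a x <= length w.

Lemma eval_in_universe w a t : in_universe w a -> 1 <= eval_term w a t <= length w.
Proof. intros Ha. pose proof (Ha 0). destruct t; cbn; auto; lia. Qed.

Lemma in_universe_update w a x v :
  in_universe w a -> 1 <= v <= length w -> in_universe w (update a x v).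
Proof. intros Ha Hv y. unfold update. destruct (y =? x); auto. Qed.

Definition spelled (w : list bool) (a : nat -> nat) (b : branch) : Prop :=
  spells w (eval_term w a (lo b)) (eval_term w a (hi b)) (word b).

Definition at_most_one_active (w : list bool) (a : nat -> nat) (bs : list branch) : Prop :=
  forall b b', In b bs -> In b' bs -> sat w a (guard b) -> sat w a (guard b') -> b = b'.

Definition split_assign (a : nat -> nat) (k z1 z2 : nat) : nat -> nat :=
  update (update a (3 * k) z1) (3 * k + 1) z2.

Definition level_assign (a : nat -> nat) (k z1 z2 u : nat) : nat -> nat :=
  update (split_assign a k z1 z2) (3 * k + 2) u.

Lemma agree_split_assign a k z1 z2 : agree_below (3 * k) a (split_assign a k z1 z2).
Proof.
  apply (agree_below_trans _ _ (update a (3 * k) z1)); apply agree_below_update; lia.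
Qed.

Lemma agree_level_assign a k z1 z2 u : agree_below (3 * k) a (level_assign a k z1 z2 u).
Proof.
  apply (agree_below_trans _ _ (split_assign a k z1 z2)); [apply agree_split_assign|].
  apply agree_below_update. lia.
Qed.

Lemma eval_split_Z1 w a k z1 z2 : eval_term w (split_assign a k z1 z2) (Z1 k) = z1.
Proof. unfold Z1, split_assign. cbn [eval_term]. rewrite update_neq by lia. apply update_eq. Qed.

Lemma eval_split_Z2 w a k z1 z2 : eval_term w (split_assign a k z1 z2) (Z2 k) = z2.
Proof. apply update_eq. Qed.

Lemma eval_level_Z1 w a k z1 z2 u : eval_term w (level_assign a k z1 z2 u) (Z1 k) = z1.
Proof. unfold Z1, level_assign. cbn [eval_term]. rewrite update_neq by lia. apply (eval_split_Z1 w). Qed.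

Lemma eval_level_Z2 w a k z1 z2 u : eval_term w (level_assign a k z1 z2 u) (Z2 k) = z2.
Proof. unfold Z2, level_assign. cbn [eval_term]. rewrite update_neq by lia. apply (eval_split_Z2 w). Qed.

Lemma eval_level_U w a k z1 z2 u : eval_term w (level_assign a k z1 z2 u) (U k) = u.
Proof. apply update_eq. Qed.

Lemma in_universe_split_assign w a k z1 z2 :
  in_universe w a -> 1 <= z1 <= length w -> 1 <= z2 <= length w ->
  in_universe w (split_assign a k z1 z2).
Proof. intros. unfold split_assign. repeat apply in_universe_update; assumption. Qed.

Lemma in_universe_level_assign w a k z1 z2 u :
  in_universe w a -> 1 <= z1 <= length w -> 1 <= z2 <= length w -> 1 <= u <= length w ->
  in_universe w (level_assign a k z1 z2 u).
Proof. intros. apply in_universe_update; [apply in_universe_split_assign|]; assumption. Qed.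

Lemma sat_describe_zero w a k bs :
  sat w a (describe k 0 bs) <->
  forall x, 1 <= x <= length w ->
    forall b, In b bs -> sat w (update a (3 * k) x) (leaf_constraint k b).
Proof. cbn [describe sat]. setoid_rewrite sat_FConj_map. reflexivity. Qed.

Lemma sat_describe_succ w a k d bs :
  sat w a (describe k (S d) bs) <->
  exists z1 z2, 1 <= z1 <= length w /\ 1 <= z2 <= length w /\
    (forall b, In b bs -> sat w (split_assign a k z1 z2) (split_constraint k (3 ^ d) b)) /\
    (forall u, 1 <= u <= length w ->
       sat w (level_assign a k z1 z2 u) (describe (S k) d (flat_map (children k (3 ^ d)) bs))).
Proof.
  cbn [describe sat]. setoid_rewrite sat_FConj_map. split.
  - intros (z1 & Hz1 & z2 & Hz2 & HC & HL). exists z1, z2. auto.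
  - intros (z1 & z2 & Hz1 & Hz2 & HC & HL). exists z1. split; [assumption|].
    exists z2. auto.
Qed.

Lemma sat_leaf_constraint w a k b x : branch_below (3 * k) b ->
  sat w (update a (3 * k) x) (leaf_constraint k b) <->
  (sat w a (guard b) ->
   match word b with
   | [] => eval_term w a (lo b) = eval_term w a (hi b)
   | [c] => eval_term w a (lo b) < eval_term w a (hi b) /\
            (eval_term w a (lo b) < x <= eval_term w a (hi b) -> x = eval_term w a (hi b)) /\
            nth (eval_term w a (hi b) - 1) w false = c
   | _ => False
   end).
Proof.
  intros (Hg & Hl & Hh).
  assert (Hag : agree_below (3 * k) a (update a (3 * k) x)) by (apply agree_below_update; lia).
  unfold leaf_constraint. cbn [sat].
  rewrite <- (sat_agree w _ _ _ _ Hg Hag).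
  destruct (word b) as [|c [|c' v]]; cbn [sat]; [|rewrite sat_FWithin, sat_FLetter|tauto];
    rewrite <- ?(eval_agree w _ _ _ _ Hl Hag), <- ?(eval_agree w _ _ _ _ Hh Hag);
    [tauto|].
  unfold Z1. rewrite eval_update_var. tauto.
Qed.

Lemma leaf_sound w a k b :
  in_universe w a -> branch_below (3 * k) b ->
  (forall x, 1 <= x <= length w -> sat w (update a (3 * k) x) (leaf_constraint k b)) ->
  sat w a (guard b) -> spelled w a b.
Proof.
  intros Ha Hb Hleaf Hg.
  pose proof (fun x Hx => proj1 (sat_leaf_constraint w a k b x Hb) (Hleaf x Hx) Hg) as Hok.
  pose proof (eval_in_universe w a (lo b) Ha). pose proof (eval_in_universe w a (hi b) Ha).
  unfold spelled. destruct (word b) as [|c [|c' v]].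
  - rewrite (Hok 1 ltac:(lia)). apply spells_nil.
  - destruct (Hok 1 ltac:(lia)) as [Hlt _].
    destruct (Hok (eval_term w a (lo b) + 1) ltac:(lia)) as [_ [Hsucc Hc]].
    specialize (Hsucc ltac:(lia)).
    split; [cbn; lia|]. intros i Hi. cbn in Hi. replace i with 0 by lia.
    cbn [nth]. rewrite <- Hc. f_equal. lia.
  - destruct (Hok 1 ltac:(lia)).
Qed.

Lemma leaf_complete w a k b x :
  branch_below (3 * k) b -> length (word b) <= 1 ->
  (sat w a (guard b) -> spelled w a b) ->
  sat w (update a (3 * k) x) (leaf_constraint k b).
Proof.
  intros Hb Hlen Hsp. apply sat_leaf_constraint; [assumption|]. intros Hg.
  specialize (Hsp Hg). unfold spelled in Hsp.
  destruct (word b) as [|c [|c' v]]; destruct Hsp as [E M]; cbn in E, Hlen; [lia| |lia].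
  split; [lia|]. split; [lia|].
  replace (eval_term w a (hi b) - 1) with (eval_term w a (lo b) + 0) by lia.
  apply (M 0). cbn. lia.
Qed.

Lemma sat_split_constraint w a k c z1 z2 b : branch_below (3 * k) b ->
  sat w (split_assign a k z1 z2) (split_constraint k c b) <->
  (sat w a (guard b) ->
   ordered_for (part1 c (word b)) (eval_term w a (lo b)) z1 /\
   ordered_for (part2 c (word b)) z1 z2 /\
   ordered_for (part3 c (word b)) z2 (eval_term w a (hi b))).
Proof.
  intros (Hg & Hl & Hh). pose proof (agree_split_assign a k z1 z2) as Hag.
  unfold split_constraint. cbn [sat].
  rewrite !sat_FOrdered, <- (sat_agree w _ _ _ _ Hg Hag),
    <- (eval_agree w _ _ _ _ Hl Hag), <- (eval_agree w _ _ _ _ Hh Hag),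
    eval_split_Z1, eval_split_Z2.
  reflexivity.
Qed.

Lemma sat_guard_child w a k z1 z2 u b v l h : branch_below (3 * k) b ->
  sat w (level_assign a k z1 z2 u) (guard (child k b v l h)) <->
  sat w a (guard b) /\
  eval_term w (level_assign a k z1 z2 u) l < u <= eval_term w (level_assign a k z1 z2 u) h.
Proof.
  intros (Hg & _ & _). cbn [child guard sat].
  rewrite sat_FWithin, eval_level_U, <- (sat_agree w _ _ _ _ Hg (agree_level_assign a k z1 z2 u)).
  reflexivity.
Qed.

Lemma spells_by_probe w a x g v l h :
  in_universe w a -> qf_below x g -> term_below x l -> term_below x h ->
  sat w a g -> ordered_for v (eval_term w a l) (eval_term w a h) ->
  (forall u, 1 <= u <= length w ->
     sat w (update a x u) (FAnd g (FWithin l h (TVar x))) ->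
     spells w (eval_term w (update a x u) l) (eval_term w (update a x u) h) v) ->
  spells w (eval_term w a l) (eval_term w a h) v.
Proof.
  intros Ha Hg Hl Hh Hga Hord Hprobe.
  destruct v as [|c v]; cbn [ordered_for] in Hord.
  - rewrite Hord. apply spells_nil.
  - (* probe at the right end of the segment *)
    set (u := eval_term w a h).
    assert (Hag : agree_below x a (update a x u)) by (apply agree_below_update; lia).
    pose proof (eval_in_universe w a h Ha).
    assert (Hs := Hprobe u ltac:(unfold u; lia)).
    rewrite <- (eval_agree w _ _ _ _ Hl Hag), <- (eval_agree w _ _ _ _ Hh Hag) in Hs.
    apply Hs. cbn [sat]. rewrite sat_FWithin, eval_update_var,
      <- (eval_agree w _ _ _ _ Hl Hag), <- (eval_agree w _ _ _ _ Hh Hag),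
      <- (sat_agree w _ _ _ _ Hg Hag).
    unfold u. split; [assumption | lia].
Qed.

Lemma split_at_by_probes w a k c z1 z2 b :
  in_universe w a -> branch_below (3 * k) b ->
  1 <= z1 <= length w -> 1 <= z2 <= length w -> sat w a (guard b) ->
  sat w (split_assign a k z1 z2) (split_constraint k c b) ->
  (forall u, 1 <= u <= length w -> forall e, In e (children k c b) ->
     sat w (level_assign a k z1 z2 u) (guard e) -> spelled w (level_assign a k z1 z2 u) e) ->
  split_at w c (eval_term w a (lo b)) z1 z2 (eval_term w a (hi b)) (word b).
Proof.
  intros Ha Hb Hz1 Hz2 Hg Hsplit Hchildren.
  destruct (proj1 (sat_split_constraint w a k c z1 z2 b Hb) Hsplit Hg) as (O1 & O2 & O3).
  destruct Hb as (Hgb & Hl & Hh).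
  assert (HA : agree_below (3 * k) a (split_assign a k z1 z2)) by apply agree_split_assign.
  assert (Hpiece : forall v l h, In (child k b v l h) (children k c b) ->
            term_below (3 * k + 2) l -> term_below (3 * k + 2) h ->
            ordered_for v (eval_term w (split_assign a k z1 z2) l) (eval_term w (split_assign a k z1 z2) h) ->
            spells w (eval_term w (split_assign a k z1 z2) l) (eval_term w (split_assign a k z1 z2) h) v).
  { intros v l h Hin Hl' Hh' Hord.
    apply (spells_by_probe w (split_assign a k z1 z2) (3 * k + 2) (guard b)); try assumption.
    - apply in_universe_split_assign; assumption.
    - apply (qf_below_mono (3 * k)); [lia | assumption].
    - apply (sat_agree w _ _ _ _ Hgb HA). assumption.
    - intros u Hu Hs. exact (Hchildren u Hu _ Hin Hs). }
  assert (Hl' : term_below (3 * k + 2) (lo b)) by (apply (term_below_mono (3 * k)); auto; lia).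
  assert (Hh' : term_below (3 * k + 2) (hi b)) by (apply (term_below_mono (3 * k)); auto; lia).
  assert (HZ1 : term_below (3 * k + 2) (Z1 k)) by (cbn; lia).
  assert (HZ2 : term_below (3 * k + 2) (Z2 k)) by (cbn; lia).
  pose proof (Hpiece (part1 c (word b)) (lo b) (Z1 k) (or_introl eq_refl) Hl' HZ1) as S1.
  pose proof (Hpiece (part2 c (word b)) (Z1 k) (Z2 k)
                (or_intror (or_introl eq_refl)) HZ1 HZ2) as S2.
  pose proof (Hpiece (part3 c (word b)) (Z2 k) (hi b)
                (or_intror (or_intror (or_introl eq_refl))) HZ2 Hh') as S3.
  rewrite eval_split_Z1, <- (eval_agree w _ _ _ _ Hl HA) in S1.
  rewrite eval_split_Z1, eval_split_Z2 in S2.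
  rewrite eval_split_Z2, <- (eval_agree w _ _ _ _ Hh HA) in S3.
  split; [|split]; auto.
Qed.

Lemma sat_guard_children_parent w a k c z1 z2 u b e :
  branch_below (3 * k) b -> In e (children k c b) ->
  sat w (level_assign a k z1 z2 u) (guard e) -> sat w a (guard b).
Proof.
  intros Hb He Hs.
  destruct He as [<-|[<-|[<-|[]]]]; apply sat_guard_child in Hs; tauto.
Qed.

Lemma length_word_children k c b e :
  In e (children k c b) -> length (word b) <= 3 * c -> length (word e) <= c.
Proof.
  intros He Hlen. destruct (length_parts c (word b) Hlen) as (L1 & L2 & L3).
  destruct He as [<-|[<-|[<-|[]]]]; assumption.
Qed.

Section Children.

Variables (w : list bool) (a : nat -> nat) (k c z1 z2 u : nat) (bs : list branch).
Hypothesis Hbs : all_below (3 * k) bs.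
Hypothesis Hsplit : forall b, In b bs -> sat w a (guard b) ->
  split_at w c (eval_term w a (lo b)) z1 z2 (eval_term w a (hi b)) (word b).

Lemma children_at_most_one_active :
  at_most_one_active w a bs ->
  at_most_one_active w (level_assign a k z1 z2 u) (flat_map (children k c) bs).
Proof.
  intros Hone e e' He He' Hge Hge'.
  apply in_flat_map in He as (b & Hb & He). apply in_flat_map in He' as (b' & Hb' & He').
  pose proof (sat_guard_children_parent w a k c z1 z2 u b e (Hbs b Hb) He Hge) as Hg.
  pose proof (sat_guard_children_parent w a k c z1 z2 u b' e' (Hbs b' Hb') He' Hge') as Hg'.
  pose proof (Hone b b' Hb Hb' Hg Hg') as Eb. subst b'.
  destruct (Hsplit b Hb Hg) as (_ & [E2 _] & _).
  (* the probe lies in only one of the three consecutive parts *)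
  destruct He as [<-|[<-|[<-|[]]]]; destruct He' as [<-|[<-|[<-|[]]]]; try reflexivity;
    apply sat_guard_child in Hge as [_ Hu]; apply sat_guard_child in Hge' as [_ Hu'];
    try apply Hbs; try assumption;
    rewrite ?eval_level_Z1, ?eval_level_Z2 in Hu;
    rewrite ?eval_level_Z1, ?eval_level_Z2 in Hu'; lia.
Qed.

Lemma children_spelled :
  forall e, In e (flat_map (children k c) bs) ->
  sat w (level_assign a k z1 z2 u) (guard e) -> spelled w (level_assign a k z1 z2 u) e.
Proof.
  intros e He Hge. apply in_flat_map in He as (b & Hb & He).
  pose proof (Hbs b Hb) as Hb'. destruct Hb' as (_ & Hl & Hh).
  pose proof (agree_level_assign a k z1 z2 u) as HL.
  destruct (Hsplit b Hb (sat_guard_children_parent w a k c z1 z2 u b e (Hbs b Hb) He Hge))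
    as (S1 & S2 & S3).
  unfold spelled.
  destruct He as [<-|[<-|[<-|[]]]]; cbn [child lo hi word];
    rewrite ?eval_level_Z1, ?eval_level_Z2,
      <- ?(eval_agree w _ _ _ _ Hl HL), <- ?(eval_agree w _ _ _ _ Hh HL);
    assumption.
Qed.

End Children.

Lemma exists_split_points w a c bs :
  in_universe w a -> at_most_one_active w a bs ->
  (forall b, In b bs -> sat w a (guard b) -> spelled w a b) ->
  exists z1 z2, 1 <= z1 <= length w /\ 1 <= z2 <= length w /\
    forall b, In b bs -> sat w a (guard b) ->
      split_at w c (eval_term w a (lo b)) z1 z2 (eval_term w a (hi b)) (word b).
Proof.
  intros Ha Hone Hsp. pose proof (Ha 0) as Hw.
  destruct (classic (exists b0, In b0 bs /\ sat w a (guard b0))) as [(b0 & Hb0 & Hg0)|Hnone].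
  - pose proof (spells_split_at w c _ _ _ (Hsp b0 Hb0 Hg0)) as Hsplit.
    pose proof (eval_in_universe w a (lo b0) Ha). pose proof (eval_in_universe w a (hi b0) Ha).
    pose proof Hsplit as (_ & [E2 _] & [E3 _]).
    eexists; eexists; split; [|split].
    3: { intros b Hb Hg. rewrite (Hone b b0 Hb Hb0 Hg Hg0). exact Hsplit. }
    all: lia.
  - exists 1, 1. split; [|split]; [lia | lia |].
    intros b Hb Hg. exfalso. eauto.
Qed.

Lemma describe_sound w d : forall k bs a,
  in_universe w a -> all_below (3 * k) bs -> sat w a (describe k d bs) ->
  forall b, In b bs -> sat w a (guard b) -> spelled w a b.
Proof.
  induction d as [|d IH]; intros k bs a Ha Hbs Hsat b Hb Hg.
  - rewrite sat_describe_zero in Hsat.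
    apply (leaf_sound w a k); [assumption | apply Hbs, Hb | | assumption].
    intros x Hx. exact (Hsat x Hx b Hb).
  - apply sat_describe_succ in Hsat as (z1 & z2 & Hz1 & Hz2 & Hsplit & Hrest).
    apply (split_at_spells w (3 ^ d) _ z1 z2), (split_at_by_probes w a k); auto.
    intros u Hu e He. apply (IH (S k) (flat_map (children k (3 ^ d)) bs)).
    + apply in_universe_level_assign; assumption.
    + apply all_below_children, Hbs.
    + apply Hrest, Hu.
    + apply in_flat_map. eauto.
Qed.

Lemma describe_complete w d : forall k bs a,
  in_universe w a -> all_below (3 * k) bs ->
  (forall b, In b bs -> length (word b) <= 3 ^ d) ->
  at_most_one_active w a bs ->
  (forall b, In b bs -> sat w a (guard b) -> spelled w a b) ->
  sat w a (describe k d bs).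
Proof.
  induction d as [|d IH]; intros k bs a Ha Hbs Hlen Hone Hsp.
  - apply sat_describe_zero. intros x _ b Hb.
    apply leaf_complete; [apply Hbs, Hb | exact (Hlen b Hb) | apply Hsp, Hb].
  - destruct (exists_split_points w a (3 ^ d) bs Ha Hone Hsp) as (z1 & z2 & Hz1 & Hz2 & Hsplit).
    apply sat_describe_succ. exists z1, z2. split; [|split; [|split]]; try assumption.
    + intros b Hb. apply sat_split_constraint; [apply Hbs, Hb|].
      intros Hg. apply (split_at_ordered w), Hsplit; assumption.
    + intros u Hu. apply IH.
      * apply in_universe_level_assign; assumption.
      * apply all_below_children, Hbs.
      * intros e He. apply in_flat_map in He as (b & Hb & He).
        exact (length_word_children k (3 ^ d) b e He (Hlen b Hb)).
      * apply children_at_most_one_active; assumption.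
      * apply children_spelled; assumption.
Qed.

(** * The sentence and its size *)

(* Position 1 carries [b]; positions [2 .. n] are the segment [(min, max]] and must spell [v]. *)
Definition string_sentence (b : bool) (v : list bool) (D : nat) : formula :=
  FAnd (FLetter TMin b) (describe 0 D [Branch FTrue v TMin TMax]).

Lemma all_below_root v : all_below 0 [Branch FTrue v TMin TMax].
Proof. intros b [<-|[]]. repeat split. Qed.

Lemma sentence_string_sentence b v D : sentence (string_sentence b v D).
Proof.
  apply sentence_free_below0, free_below_FAnd.
  - apply (free_below_qf 0). destruct b; cbn; auto.
  - apply (free_below_describe D 0), all_below_root.
Qed.

Lemma qcount_string_sentence b v D : qcount (string_sentence b v D) = 3 * D + 1.
Proof.
  cbn [string_sentence qcount].
  rewrite (qcount_qf_below 0), (qcount_describe D 0) by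
    (apply all_below_root || (destruct b; cbn; auto)).
  reflexivity.
Qed.

Lemma models_string_sentence b v D :
  length v <= 3 ^ D -> models (b :: v) (string_sentence b v D).
Proof.
  intros HD. unfold models, string_sentence. cbn [sat]. split.
  - apply sat_FLetter. reflexivity.
  - apply describe_complete.
    + intros x. cbn. lia.
    + apply all_below_root.
    + intros e [<-|[]]. exact HD.
    + intros e e' [<-|[]] [<-|[]] _ _. reflexivity.
    + intros e [<-|[]] _. split; [reflexivity | intros i _; reflexivity].
Qed.

Lemma string_sentence_unique b v D w :
  1 <= length w -> models w (string_sentence b v D) -> w = b :: v.
Proof.
  intros Hw Hm. unfold models, string_sentence in Hm. cbn [sat] in Hm.
  destruct Hm as [Hb Hd]. apply sat_FLetter in Hb.
  assert (Ha : in_universe w (fun _ => 1)) by (intros x; cbn; lia).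
  pose proof (describe_sound w D 0 _ _ Ha (all_below_root v) Hd
                (Branch FTrue v TMin TMax) (or_introl eq_refl) I) as Hsp.
  destruct w as [|x w]; cbn in Hw; [lia|].
  cbn in Hb. subst x. f_equal. exact (spells_from_one b w v Hsp).
Qed.

Lemma exists_pow3_between n : 1 <= n -> exists D, n <= 3 ^ D < 3 * n.
Proof.
  intros Hn.
  assert (H : forall m, n <= 3 ^ m -> exists D, n <= 3 ^ D < 3 * n).
  { induction m as [|m IH]; intros Hm.
    - exists 0. cbn in *. lia.
    - destruct (Nat.le_gt_cases n (3 ^ m)) as [Hle|Hgt]; [auto|].
      exists (S m). rewrite Nat.pow_succ_r' in *. lia. }
  apply (H n), Nat.lt_le_incl, Nat.pow_gt_lin_r. lia.
Qed.

Lemma qcount_bound n D :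
  1 <= n -> 3 ^ D < 3 * n -> (INR (3 * D + 1) <= 3 * log3 (INR n) + 4)%R.
Proof.
  intros Hn HD.
  assert (Hln3 : (0 < ln 3)%R) by (rewrite <- ln_1; apply ln_increasing; lra).
  assert (HnR : (1 <= INR n)%R) by (apply (le_INR 1); exact Hn).
  assert (Hpow : (3 ^ D <= 3 * INR n)%R).
  { replace 3%R with (INR 3) by (cbn; lra). rewrite <- pow_INR, <- mult_INR.
    apply le_INR. lia. }
  assert (Hlog : (INR D * ln 3 <= ln 3 + ln (INR n))%R).
  { rewrite <- ln_pow, <- ln_mult by lra.
    destruct (Rle_lt_or_eq_dec _ _ Hpow) as [Hlt|Heq]; [|rewrite Heq; lra].
    left. apply ln_increasing; [apply pow_lt; lra | exact Hlt]. }
  assert (HD' : (INR D <= 1 + log3 (INR n))%R).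
  { unfold log3. apply (Rmult_le_reg_r (ln 3)); [exact Hln3|].
    rewrite Rmult_plus_distr_r. unfold Rdiv. rewrite Rmult_assoc, Rinv_l by lra. lra. }
  rewrite plus_INR, mult_INR. cbn [INR]. lra.
Qed.

Theorem mainTheorem10 :
  exists C : R,
    forall (n : nat) (w : list bool),
      1 <= n -> length w = n ->
      exists phi : formula,
        sentence phi /\
        (INR (qcount phi) <= 3 * log3 (INR n) + C)%R /\
        models w phi /\
        (forall w' : list bool, 1 <= length w' -> w' <> w -> ~ models w' phi).
Proof.
  exists 4%R. intros n w Hn Hlen.
  destruct w as [|b v]; [cbn in Hlen; lia|].
  destruct (exists_pow3_between n Hn) as (D & HD & HD3).
  exists (string_sentence b v D). split; [|split; [|split]].
  - apply sentence_string_sentence.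
  - rewrite qcount_string_sentence. apply qcount_bound; assumption.
  - apply models_string_sentence. cbn in Hlen. lia.
  - intros w' Hw' Hne Hm. exact (Hne (string_sentence_unique b v D w' Hw' Hm)).
Qed.
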